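(* Let $k\ge2$ be an integer. If there exists an integer $\alpha\ge2$ such that $N_\alpha(k,k)<N_{\alpha+1}(k,k)$, then at least one of the following holds: (1) Letting $W_{k,\alpha}$ be the set of words over $\{1,\dots,\alpha+1\}$ of length $N_\alpha(k,k)$ that contain no factor which is a $k$-power or a $k$-anti-power, for every $w\in W_{k,\alpha}$ the two factors of $w$ of length $N_\alpha(k,k)-1$ each use exactly $\alpha+1$ distinct letters. (2) There exists a word $w$ over $\{1,\dots,\alpha\}$, containing no factor which is a $k$-power or a $k$-anti-power, of the form $$w=u_1(1u_1)^{k-1}x_1=u_2(2u_2)^{k-1}x_2=\cdots=u_\alpha(\alpha u_\alpha)^{k-1}x_\alpha,$$ where $x_1,\dots,x_\alpha,u_1,\dots,u_\alpha$ are finite words with $|u_1|<\cdots<|u_\alpha|$ and, for all $1\le i<j\le\alpha$, $$\gcd(|u_i|+1,|u_j|+1)\le\frac{|u_j|+1}{k-1}.$$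
   Context: A $k$-power is a word $u^k$ ($k$ concatenated copies of $u$) for a nonempty word $u$. A $k$-anti-power is a word $w=w_1\cdots w_k$ with $|w_1|=\cdots=|w_k|$ and $w_1,\dots,w_k$ pairwise distinct. $N_\alpha(k,k)$ is the smallest positive integer $N$ such that every word of length $N$ over an alphabet of size $\alpha$ contains a factor (contiguous subword) that is a $k$-power or a $k$-anti-power. In $(a u)^{k-1}$, $a$ denotes the single letter $a$. *)

(* Words are sequences of naturals; the alphabet {1,...,a}
   is imposed by the predicate word_over. *)
From mathcomp Require Import all_boot.
Set Implicit Arguments. Unset Strict Implicit. Unset Printing Implicit Defensive.

Definition word_over (a : nat) (w : seq nat) : bool :=
  all (fun c => (0 < c) && (c <= a)) w.

Definition kpower (k : nat) (w : seq nat) : Prop :=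
  exists u : seq nat, u != [::] /\ w = flatten (nseq k u).

Definition kantipower (k : nat) (w : seq nat) : Prop :=
  exists (bs : seq (seq nat)) (m : nat),
    size bs = k /\ all (fun b => size b == m) bs /\ uniq bs /\ w = flatten bs.

Definition avoids (k : nat) (w : seq nat) : Prop :=
  forall v : seq nat, infix v w -> ~ kpower k v /\ ~ kantipower k v.

Definition unavoidable_len (a k n : nat) : Prop :=
  forall w : seq nat, word_over a w -> size w = n -> ~ avoids k w.

Definition is_N (a k N : nat) : Prop :=
  0 < N /\ unavoidable_len a k N /\
  (forall M, 0 < M -> unavoidable_len a k M -> N <= M).

From mathcomp Require Import all_boot zify.
From Stdlib Require Import Classical.
From Stdlib Require ClassicalEpsilon.

(* If the first alternative fails, some avoiding word of length N_alpha over
   alpha + 1 letters has a suffix (or, after reversal, a prefix) of length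
   N_alpha - 1 using at most alpha letters; write that word (or its reversal)
   as w = c :: v with v using at most alpha letters.  Then c does
   not occur in v, otherwise w could be relabelled into an avoiding word of
   length N_alpha over alpha letters.  Enlarge the letters of v to a set T of
   exactly alpha letters.  For t in T the word t :: v again has length N_alpha
   and at most alpha letters, so it has a bad factor; this factor is a prefix,
   and it is not an anti-power, since replacing t by the fresh letter c would
   give one in w.  So t :: v starts with (t u_t)^k, i.e.
   v = u_t (t u_t)^(k-1) x_t, and t sits at every position i (|u_t| + 1) - 1
   with 1 <= i <= k - 1.  Two letters cannot share such a position, which
   forces distinct |u_t| and the gcd bound; relabelling T as 1, ..., alpha by
   increasing |u_t| gives the second alternative. *)

Set Implicit Arguments.
Unset Strict Implicit.

Lemma avoids_infix k g w : infix g w -> avoids k w -> avoids k g.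
Proof. by move=> gw w_avoids h hg; apply: w_avoids; exact: infix_trans hg gw. Qed.

Lemma not_avoids_factor k w :
  ~ avoids k w -> exists g, infix g w /\ (kpower k g \/ kantipower k g).
Proof.
move=> not_avoids; apply: NNPP => no_factor; apply: not_avoids => g gw.
by split=> bad; apply: no_factor; exists g; tauto.
Qed.

Lemma kpower_rev k g : kpower k g -> kpower k (rev g).
Proof.
case=> [[|a u] [_ ->]] //; exists (rev (a :: u)).
split; first by rewrite rev_cons; case: (rev u).
by rewrite rev_flatten map_nseq rev_nseq.
Qed.

Lemma kantipower_rev k g : kantipower k g -> kantipower k (rev g).
Proof.
case=> [bs [m [size_bs [size_blocks [uniq_bs ->]]]]].
exists (rev (map rev bs)), m; rewrite size_rev size_map rev_uniq rev_flatten.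
rewrite (map_inj_uniq (can_inj (@revK nat))) all_rev all_map; split=> //; split=> //.
by apply/allP=> b b_in /=; rewrite size_rev (allP size_blocks).
Qed.

Lemma avoids_rev k w : avoids k w -> avoids k (rev w).
Proof.
move=> w_avoids g; rewrite -infix_revLR => /w_avoids [no_pow no_anti].
by split=> [/kpower_rev | /kantipower_rev].
Qed.

Lemma kpower_map (f : nat -> nat) k g : kpower k g -> kpower k (map f g).
Proof. by case=> [[|a u] [_ ->]] //; exists (map f (a :: u)); rewrite map_flatten map_nseq. Qed.

Lemma kantipower_map (f : nat -> nat) k g :
  {in g &, injective f} -> kantipower k g -> kantipower k (map f g).
Proof.
move=> f_inj [bs [m [size_bs [size_blocks [uniq_bs g_eq]]]]].
exists (map (map f) bs), m; rewrite size_map all_map -map_flatten -g_eq.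
split=> //; split; first by apply/allP=> b b_in /=; rewrite size_map (allP size_blocks).
split=> //; rewrite (map_inj_in_uniq _) // => b1 b2 b1_in b2_in.
have in_g b : b \in bs -> all [in g] b.
  by move=> b_in; apply/allP=> y y_in; rewrite g_eq; apply/flattenP; exists b.
exact: (inj_in_map f_inj) (in_g _ b1_in) (in_g _ b2_in).
Qed.

Lemma avoids_map (f h : nat -> nat) k w :
  {in w, cancel f h} -> avoids k w -> avoids k (map f w).
Proof.
move=> fK w_avoids g /infixP [s1 [s2 fw_eq]].
have hK : {in map f w, cancel h f} by move=> _ /mapP [x x_in ->]; rewrite fK.
have g_sub : {subset g <= map f w} by move=> y y_in; rewrite fw_eq !mem_cat y_in orbT.
have hg_infix : infix (map h g) w.
  apply/infixP; exists (map h s1), (map h s2).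
  by rewrite -!map_cat -fw_eq -map_comp map_id_in.
have h_inj : {in g &, injective h} := can_in_inj (fun y y_in => hK y (g_sub y y_in)).
have [no_pow no_anti] := w_avoids _ hg_infix.
by split=> [/(kpower_map h) | /(kantipower_map h_inj)].
Qed.

Definition rank_in (T : seq nat) (x : nat) : nat := (index x T).+1.

Lemma word_over_rank_in a T w :
  size T <= a -> {subset w <= T} -> word_over a (map (rank_in T) w).
Proof.
move=> size_T w_sub; apply/allP=> _ /mapP [x /w_sub x_in ->].
by rewrite /rank_in ltn0Sn /= (leq_trans _ size_T) // index_mem.
Qed.

Lemma avoids_rank_in k T w :
  {subset w <= T} -> avoids k w -> avoids k (map (rank_in T) w).
Proof.
move=> w_sub; apply: (avoids_map (h := fun y => nth 0 T y.-1)) => x /w_sub x_in.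
exact: nth_index.
Qed.

Lemma unavoidable_subset a k T w :
  unavoidable_len a k (size w) -> size T <= a -> {subset w <= T} -> ~ avoids k w.
Proof.
move=> unav size_T w_sub /(avoids_rank_in w_sub).
by apply: unav; [exact: word_over_rank_in | rewrite size_map].
Qed.

Lemma size_undup_sub (s T : seq nat) : {subset s <= T} -> size (undup s) <= size T.
Proof. by move=> s_sub; apply: uniq_leq_size (undup_uniq s) _ => y; rewrite mem_undup => /s_sub. Qed.

Lemma size_undup_word_over a s w : word_over a w -> {subset s <= w} -> size (undup s) <= a.
Proof.
move=> w_over s_sub; rewrite -(size_iota 1 a); apply: size_undup_sub => y /s_sub y_in.
by rewrite mem_iota add1n ltnS; apply: (allP w_over).
Qed.

Lemma size_undup_rev (s : seq nat) : size (undup (rev s)) = size (undup s).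
Proof. exact/perm_size/perm_undup/mem_rev. Qed.

Lemma behead_rev (s : seq nat) : behead (rev s) = rev (take (size s).-1 s).
Proof.
case: s => [|c s] //=; rewrite -(size_belast c s) [c :: s]lastI rev_rcons -cats1.
by rewrite take_size_cat.
Qed.

Lemma exists_uniq_superset (s : seq nat) a :
  size (undup s) <= a -> exists T, [/\ uniq T, size T = a & {subset s <= T}].
Proof.
move=> few; set M := \max_(x <- s) x.
exists (undup s ++ iota M.+1 (a - size (undup s))).
rewrite cat_uniq undup_uniq iota_uniq size_cat size_iota subnKC //; split=> //.
  rewrite andbT; apply/hasPn => y; rewrite mem_iota mem_undup => /andP [M_lt _].
  apply/negP => /(leq_bigmax_seq (P := xpredT) (F := id)) /(_ isT) y_le.
  by have := leq_ltn_trans y_le M_lt; rewrite ltnn.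
by move=> y y_in; rewrite mem_cat mem_undup y_in.
Qed.

Lemma kpower_cons k t s :
  kpower k (t :: s) -> exists u, s = u ++ flatten (nseq k.-1 (t :: u)).
Proof. by case: k => [|k] [[|b u] [_]] //= [-> ->]; exists u. Qed.

Lemma flatten_size0 (T : Type) (bs : seq (seq T)) :
  all (fun b => size b == 0) bs -> flatten bs = [::].
Proof. by elim: bs => [|[|x b] bs IH] //= /IH. Qed.

Lemma kantipower_cons_fresh k t c s :
  c \notin s -> kantipower k (t :: s) -> kantipower k (c :: s).
Proof.
move=> c_fresh [[|b0 bs] [m [size_bs [size_blocks [uniq_bs ts_eq]]]]] //.
case: b0 => [|b r] in size_bs size_blocks uniq_bs ts_eq *.
  by move: size_blocks ts_eq => /= /andP [/eqP <-] /flatten_size0 ->.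
case: ts_eq => _ s_eq; exists ((c :: r) :: bs), m; rewrite /= -s_eq.
split=> //; split=> //; split=> //.
apply/andP; split; last by case/andP: uniq_bs.
apply: contra c_fresh => cr_in.
by rewrite s_eq mem_cat; apply/orP; right; apply/flattenP; exists (c :: r); rewrite ?mem_head.
Qed.

Lemma power_prefix_of_cons k c t v :
  c \notin v -> avoids k (c :: v) -> ~ avoids k (t :: v) ->
  exists u x, v = u ++ flatten (nseq k.-1 (t :: u)) ++ x.
Proof.
move=> c_fresh cv_avoids /not_avoids_factor [g [g_infix g_bad]].
have v_avoids : avoids k v := avoids_infix (infix_cons v c) cv_avoids.
have not_in_v h : infix h v -> kpower k h \/ kantipower k h -> False.
  by move=> /v_avoids; tauto.
move: g_infix; rewrite infix_consl => /orP [/prefixP [x] | /not_in_v /(_ g_bad)] //.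
case: g g_bad => [|t' s] g_bad; first by case: (not_in_v _ (infix0s v) g_bad).
case=> -> v_eq; case: g_bad => [/kpower_cons [u s_eq] | anti_ts].
  by exists u, x; rewrite v_eq s_eq -catA.
have c_notin_s : c \notin s by apply: contra c_fresh; rewrite v_eq mem_cat => ->.
have cs_infix : infix (c :: s) (c :: v) by rewrite v_eq -cat_cons prefixW ?prefix_prefix.
have [_ no_anti] := cv_avoids _ cs_infix.
by case: no_anti; exact: kantipower_cons_fresh c_notin_s anti_ts.
Qed.

Lemma nth_power_block (T : Type) (x0 t : T) u x n i : 0 < i <= n ->
  nth x0 (u ++ flatten (nseq n (t :: u)) ++ x) (i * (size u).+1).-1 = t.
Proof.
elim: n i => [|n IH] [|[|i]] // i_le.
  by rewrite mul1n nth_cat ltnn subnn.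
have -> : u ++ ((t :: u) ++ flatten (nseq n (t :: u))) ++ x
          = (u ++ [:: t]) ++ (u ++ flatten (nseq n (t :: u)) ++ x) by rewrite -!catA.
rewrite nth_cat size_cat addn1 ifF; last by apply/negbTE; rewrite -leqNgt; lia.
have -> : (i.+2 * (size u).+1).-1 - (size u).+1 = (i.+1 * (size u).+1).-1 by lia.
exact: IH.
Qed.

Lemma gcdn_period_bound (T : eqType) (x0 t1 t2 : T) (v : seq T) p q n :
  0 < p < q -> t1 != t2 ->
  (forall i, 0 < i <= n -> nth x0 v (i * p).-1 = t1) ->
  (forall i, 0 < i <= n -> nth x0 v (i * q).-1 = t2) ->
  gcdn p q * n <= q.
Proof.
(* Otherwise q = q' d with q' < n, and position lcm p q - 1 = q' p - 1 = p' q - 1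
   would hold both letters. *)
case/andP=> p_gt0 p_lt_q t12 per1 per2; rewrite leqNgt; apply/negP => q_lt.
set d := gcdn p q.
have d_gt0 : 0 < d by rewrite gcdn_gt0 p_gt0.
have p_eq : p = p %/ d * d by rewrite divnK // dvdn_gcdl.
have q_eq : q = q %/ d * d by rewrite divnK // dvdn_gcdr.
set p' := p %/ d in p_eq; set q' := q %/ d in q_eq.
have p'_lt_q' : p' < q' by rewrite -(ltn_pmul2r d_gt0) -p_eq -q_eq.
have q'_lt_n : q' < n by rewrite -(ltn_pmul2r d_gt0) -q_eq mulnC.
have p'_gt0 : 0 < p' by rewrite -(ltn_pmul2r d_gt0) -p_eq.
have q'_gt0 : 0 < q' := leq_trans p'_gt0 (ltnW p'_lt_q').
have p'_le_n : p' <= n := leq_trans (ltnW p'_lt_q') (ltnW q'_lt_n).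
move/eqP: t12; apply; rewrite -(per1 q') ?q'_gt0 ?(ltnW q'_lt_n) //.
by rewrite -(per2 p') ?p'_gt0 ?p'_le_n // {1}q_eq {1}p_eq mulnCA mulnA.
Qed.

Definition has_power_ladder (k a : nat) : Prop :=
  exists (w : seq nat) (u x : nat -> seq nat),
    word_over a w /\ avoids k w /\
    (forall i, 1 <= i <= a -> w = u i ++ flatten (nseq k.-1 (i :: u i)) ++ x i) /\
    (forall i j, 1 <= i -> i < j -> j <= a ->
       size (u i) < size (u j) /\
       gcdn (size (u i)).+1 (size (u j)).+1 * k.-1 <= (size (u j)).+1).

Section PowerLadder.

Variables (k : nat) (v T : seq nat) (u x : nat -> seq nat).
Hypotheses (k_gt1 : 1 < k) (v_avoids : avoids k v) (T_uniq : uniq T)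
  (v_sub : {subset v <= T})
  (v_periodic : {in T, forall t, v = u t ++ flatten (nseq k.-1 (t :: u t)) ++ x t}).

Let period t := (size (u t)).+1.

Lemma nth_periodic t i : t \in T -> 0 < i <= k.-1 -> nth 0 v (i * period t).-1 = t.
Proof. by move=> t_in; rewrite {1}(v_periodic t_in); exact: nth_power_block. Qed.

Lemma period_inj : {in T &, injective period}.
Proof.
move=> t1 t2 t1_in t2_in eq_period.
have k1 : 0 < 1 <= k.-1 by lia.
by rewrite -(nth_periodic t1_in k1) -(nth_periodic t2_in k1) eq_period.
Qed.

Let sortedT := sort (relpre period leq) T.

Lemma sortedT_uniq : uniq sortedT.
Proof. by rewrite sort_uniq. Qed.

Lemma mem_sortedT : sortedT =i T.
Proof. exact: mem_sort. Qed.

Lemma size_sortedT : size sortedT = size T.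
Proof. exact: size_sort. Qed.

Lemma period_sortedT_mono : {in [pred n | n < size T] &,
  {homo (fun i => period (nth 0 sortedT i)) : i j / i < j}}.
Proof.
have sorted_periods : sorted ltn (map period sortedT).
  rewrite ltn_sorted_uniq_leq sorted_map sort_sorted ?andbT; last by move=> ? ?; exact: leq_total.
  rewrite (map_inj_in_uniq (s := sortedT)) ?sortedT_uniq // => t1 t2.
  by rewrite !mem_sortedT; exact: period_inj.
move=> i j i_lt j_lt ij; have := sorted_ltn_nth ltn_trans 0 sorted_periods.
rewrite size_map size_sortedT => /(_ i j i_lt j_lt ij).
by rewrite !(nth_map 0) ?size_sortedT.
Qed.

Theorem power_ladder : has_power_ladder k (size T).
Proof.
pose t i := nth 0 sortedT i.-1.
have t_in i : 1 <= i <= size T -> t i \in T.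
  by move=> i_range; rewrite -mem_sortedT mem_nth // size_sortedT; lia.
have rank_t i : 1 <= i <= size T -> rank_in sortedT (t i) = i.
  by move=> i_range; rewrite /rank_in index_uniq ?sortedT_uniq ?size_sortedT; lia.
have v_sub_sorted : {subset v <= sortedT} by move=> y /v_sub; rewrite mem_sortedT.
exists (map (rank_in sortedT) v), (fun i => map (rank_in sortedT) (u (t i))),
  (fun i => map (rank_in sortedT) (x (t i))).
split; first by apply: word_over_rank_in; rewrite ?size_sortedT.
split; first exact: avoids_rank_in.
split=> [i i_range | i j i_gt0 ij j_le].
  by rewrite {1}(v_periodic (t_in _ i_range)) !map_cat map_flatten map_nseq /= rank_t.
have ti_in : t i \in T by apply: t_in; lia.
have tj_in : t j \in T by apply: t_in; lia.
have period_lt : period (t i) < period (t j) by apply: period_sortedT_mono; rewrite ?inE; lia.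
rewrite !size_map; split; first exact: period_lt.
apply: (gcdn_period_bound (x0 := 0) (v := v) (t1 := t i) (t2 := t j)).
- by rewrite period_lt.
- by rewrite nth_uniq ?sortedT_uniq ?size_sortedT; lia.
- by move=> n; exact: nth_periodic.
- by move=> n; exact: nth_periodic.
Qed.

End PowerLadder.

Lemma power_ladder_of_cons k a c v :
  1 < k -> unavoidable_len a k (size v).+1 -> avoids k (c :: v) ->
  size (undup v) <= a -> has_power_ladder k a.
Proof.
move=> k_gt1 unav cv_avoids v_few.
have c_fresh : c \notin v.
  apply/negP => c_in; apply: (unavoidable_subset (w := c :: v) unav v_few) cv_avoids => y.
  by rewrite inE mem_undup => /predU1P [->|].
have [T [T_uniq T_size v_sub]] := exists_uniq_superset v_few.
have periods t : exists ux : seq nat * seq nat,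
    t \in T -> v = ux.1 ++ flatten (nseq k.-1 (t :: ux.1)) ++ ux.2.
  case t_in : (t \in T); last by exists ([::], [::]).
  have t_sub : {subset t :: v <= T} by move=> y /predU1P [->|/v_sub].
  have tv_bad : ~ avoids k (t :: v).
    exact: (unavoidable_subset (w := t :: v) unav (eq_leq T_size) t_sub).
  have [u [x v_eq]] := power_prefix_of_cons c_fresh cv_avoids tv_bad.
  by exists (u, x).
have [ux ux_spec] := ClassicalEpsilon.choice _ periods.
have v_avoids : avoids k v := avoids_infix (infix_cons v c) cv_avoids.
rewrite -T_size; exact: (power_ladder (u := fun t => (ux t).1) (x := fun t => (ux t).2)
  k_gt1 v_avoids T_uniq v_sub ux_spec).
Qed.

Theorem lemma5p2 (k alpha Na Na1 : nat) :
  2 <= k -> 2 <= alpha ->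
  is_N alpha k Na -> is_N alpha.+1 k Na1 -> Na < Na1 ->
  (forall w : seq nat, word_over alpha.+1 w -> size w = Na -> avoids k w ->
     size (undup (take Na.-1 w)) = alpha.+1 /\
     size (undup (drop 1 w)) = alpha.+1)
  \/
  (exists (w : seq nat) (u x : nat -> seq nat),
     word_over alpha w /\ avoids k w /\
     (forall i, 1 <= i <= alpha ->
        w = u i ++ flatten (nseq k.-1 (i :: u i)) ++ x i) /\
     (forall i j, 1 <= i -> i < j -> j <= alpha ->
        size (u i) < size (u j) /\
        gcdn (size (u i)).+1 (size (u j)).+1 * k.-1 <= (size (u j)).+1)).
Proof.
move=> k_gt1 _ [Na_gt0 [unav _]] _ _.
have [ladder | no_ladder] := classic (has_power_ladder k alpha); [by right | left].
have many_letters w : size w = Na -> avoids k w -> alpha < size (undup (behead w)).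
  case: w => [|c v] /= w_size w_avoids; first by rewrite -w_size in Na_gt0.
  rewrite ltnNge; apply/negP => few; apply: no_ladder.
  by apply: power_ladder_of_cons k_gt1 _ w_avoids few; rewrite w_size.
move=> w w_over w_size w_avoids.
have letters_le s : {subset s <= w} -> size (undup s) <= alpha.+1.
  exact: size_undup_word_over w_over.
split; apply/eqP; rewrite eqn_leq.
- rewrite letters_le => [|y /mem_take //].
  rewrite -size_undup_rev -w_size -behead_rev many_letters ?size_rev //.
  exact: avoids_rev.
- rewrite letters_le => [|y /mem_drop //].
  by rewrite drop1 many_letters.
Qed.
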